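(* Every nonzero finite-dimensional left $\mathcal{O}_{nc}(B^+)$-comodule $W$ contains a semi-invariant, i.e. a nonzero $w\in W$ with coaction $w\mapsto g\otimes w$ for some grouplike element $g\in\mathcal{O}_{nc}(B^+)$; moreover $g$ can be taken of the form $a^id^j$.
   Context: $\mathcal{O}_{nc}(\mathrm{GL}_2)$ is the Hopf algebra generated by $a,b,c,d,\delta,\delta^{-1}$ with relations $ac=ca$, $bd=db$, $ad-cb=\delta=da-bc$, $\delta\delta^{-1}=1=\delta^{-1}\delta$, $a\delta^{-1}d-b\delta^{-1}c=1=d\delta^{-1}a-c\delta^{-1}b$, $b\delta^{-1}a=a\delta^{-1}b$, $c\delta^{-1}d=d\delta^{-1}c$, with $\Delta(a)=a\otimes a+b\otimes c$, $\Delta(b)=a\otimes b+b\otimes d$, $\Delta(c)=c\otimes a+d\otimes c$, $\Delta(d)=c\otimes b+d\otimes d$, $\Delta(\delta^{\pm1})=\delta^{\pm1}\otimes\delta^{\pm1}$. $\mathcal{O}_{nc}(B^+):=\mathcal{O}_{nc}(\mathrm{GL}_2)/(c)$, a quotient Hopf algebra in which the images of $a,d$ are invertible grouplike elements and $\Delta(b)=a\otimes b+b\otimes d$. $k$ algebraically closed. *)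

From HB Require Import structures.
From mathcomp Require Import all_boot all_order all_algebra.
Set Implicit Arguments. Unset Strict Implicit. Unset Printing Implicit Defensive.
Import Order.TTheory GRing.Theory Num.Theory.
Local Open Scope ring_scope.

Inductive letter := LA | LAi | LB | LD | LDi.

(* Basis monomials of O_nc(B^+):
   (m, (e0, [:: e1; ...; ek]))  stands for  d^m a^e0 b a^e1 b ... b a^ek. *)
Definition Mon := (int * (int * seq int))%type.

Fixpoint nf (w : seq letter) : Mon :=
  match w with
  | [::] => (0, (0, [::]))
  | l :: w' =>
    let: (m, (e0, es)) := nf w' in
    match l with
    | LA => (m, (e0 + 1, es))
    | LAi => (m, (e0 - 1, es))
    | LB => (m, (0, e0 :: es))
    | LD => (m + 1, (e0, es))
    | LDi => (m - 1, (e0, es))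
    end
  end.

Definition powl (pos neg : letter) (z : int) : seq letter :=
  match z with
  | Posz n => nseq n pos
  | Negz n => nseq n.+1 neg
  end.

Definition word_of_mon (x : Mon) : seq letter :=
  let: (m, (e0, es)) := x in
  powl LD LDi m ++ powl LA LAi e0 ++ flatten [seq LB :: powl LA LAi e | e <- es].

(* comultiplication on generators (c = 0):
   D(a)=a⊗a, D(a^-1)=a^-1⊗a^-1, D(b)=a⊗b+b⊗d, D(d)=d⊗d, D(d^-1)=d^-1⊗d^-1 *)
Definition dterms (l : letter) : seq (seq letter * seq letter) :=
  match l with
  | LA => [:: ([:: LA], [:: LA])]
  | LAi => [:: ([:: LAi], [:: LAi])]
  | LB => [:: ([:: LA], [:: LB]); ([:: LB], [:: LD])]
  | LD => [:: ([:: LD], [:: LD])]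
  | LDi => [:: ([:: LDi], [:: LDi])]
  end.

(* multiplicative expansion of the comultiplication of a word:
   a list of simple tensors (x ⊗ y) whose sum is D(word) *)
Fixpoint delta_word (w : seq letter) : seq (seq letter * seq letter) :=
  match w with
  | [::] => [:: ([::], [::])]
  | l :: w' => [seq (t.1 ++ p.1, t.2 ++ p.2) | t <- dterms l, p <- delta_word w']
  end.

(* structure constant: coefficient of mu ⊗ nu in D(lam) *)
Definition coef_delta (lam mu nu : Mon) : nat :=
  count (fun p => (nf p.1 == mu) && (nf p.2 == nu)) (delta_word (word_of_mon lam)).

Definition eps_mon (lam : Mon) : nat := if lam.2.2 is [::] then 1%N else 0%N.

Definition mon_ad (i j : int) : Mon := (j, (i, [::])).

(* A linear map
   rho : W -> O_nc(B^+) ⊗ W is encoded as  rho(w) = sum_{mu in S} mu ⊗ (r mu w)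
   with S a finite duplicate-free list of basis monomials containing the
   support of r : Mon -> 'End(W). *)
Definition is_left_comodule (k : fieldType) (W : vectType k)
  (S : seq Mon) (r : Mon -> 'End(W)) : Prop :=
  [/\ uniq S,
      (forall mu, mu \notin S -> r mu = 0),
      (* coassociativity: (D ⊗ id) rho = (id ⊗ rho) rho *)
      (forall mu nu, \sum_(lam <- S) (coef_delta lam mu nu)%:R *: r lam
                     = (r nu \o r mu)%VF) &
      (* counit: (eps ⊗ id) rho = id *)
      \sum_(lam <- S) (eps_mon lam)%:R *: r lam = \1%VF].

From HB Require Import structures.
From mathcomp Require Import all_boot all_order all_algebra.
From mathcomp Require Import zify.
Set Implicit Arguments. Unset Strict Implicit. Unset Printing Implicit Defensive.
Import Order.TTheory GRing.Theory Num.Theory.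
Local Open Scope ring_scope.

(** Grade O_nc(B^+) by the number of b's in a monomial; the coproduct is
    additive for this grading.  Starting from any w <> 0, choose a monomial mu0
    of maximal b-degree in the coaction of w; coassociativity shows that
    v := r mu0 w is killed by every monomial containing b.  The counit then
    gives a grouplike a^i d^j with r (a^i d^j) v <> 0, and since
    D(a^i d^j) = a^i d^j ⊗ a^i d^j, this vector is a semi-invariant of weight
    a^i d^j. *)

Scheme Equality for letter.
HB.instance Definition _ := comparableMixin letter_eq_dec.

Definition bdeg (x : Mon) : nat := size x.2.2.

Lemma bdeg_eq0P x : reflect (exists i j, x = mon_ad i j) (bdeg x == 0%N).
Proof.
case: x => m [e es]; rewrite /bdeg /= size_eq0.
by apply: (iffP eqP) => [-> | [i [j [_ _ ->]]]] //; exists e, m.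
Qed.

Lemma eps_monE x : eps_mon x = (bdeg x == 0%N) :> nat.
Proof. by case: x => m [e []]. Qed.

Lemma bdeg_nf w : bdeg (nf w) = count_mem LB w.
Proof.
rewrite /bdeg; elim: w => //= l w IH.
by case: (nf w) IH => m [e es] /= IH; case: l; rewrite /= IH.
Qed.

Lemma nf_powlA_cat e x m e0 es : nf x = (m, (e0, es)) ->
  nf (powl LA LAi e ++ x) = (m, (e0 + e, es)).
Proof.
move=> nf_x; case: e => n /=.
  elim: n => [|n IH] /=; first by rewrite nf_x addr0.
  by rewrite IH; congr (_, (_, _)); lia.
elim: n => [|n IH] /=; first by rewrite nf_x.
by move: IH => /= ->; congr (_, (_, _)); lia.
Qed.

Lemma nf_powlD_cat j x m e0 es : nf x = (m, (e0, es)) ->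
  nf (powl LD LDi j ++ x) = (m + j, (e0, es)).
Proof.
move=> nf_x; case: j => n /=.
  elim: n => [|n IH] /=; first by rewrite nf_x addr0.
  by rewrite IH; congr (_, (_, _)); lia.
elim: n => [|n IH] /=; first by rewrite nf_x.
by move: IH => /= ->; congr (_, (_, _)); lia.
Qed.

Lemma nf_word_of_mon x : nf (word_of_mon x) = x.
Proof.
have nf_bs es : nf (flatten [seq LB :: powl LA LAi e | e <- es]) = (0, (0, es)).
  by elim: es => //= e es IH; rewrite (nf_powlA_cat e IH) add0r.
case: x => m [e es] /=.
by rewrite (nf_powlD_cat m (nf_powlA_cat e (nf_bs es))) !add0r.
Qed.

Lemma count_LB_word_of_mon x : count_mem LB (word_of_mon x) = bdeg x.
Proof. by rewrite -bdeg_nf nf_word_of_mon. Qed.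

Lemma dterms_count_LB l t : t \in dterms l ->
  (count_mem LB t.1 + count_mem LB t.2)%N = (l == LB).
Proof.
by case: l => /=; rewrite !inE; try case/orP; move=> /eqP->.
Qed.

Lemma delta_word_count_LB w t : t \in delta_word w ->
  (count_mem LB t.1 + count_mem LB t.2)%N = count_mem LB w.
Proof.
elim: w t => [|l w IH] t /=; first by rewrite inE => /eqP ->.
case/allpairsP => -[u p] [/= /dterms_count_LB u_l /IH p_w ->] /=.
by rewrite !count_cat addnACA u_l p_w.
Qed.

Lemma delta_word_LB_free w : LB \notin w -> delta_word w = [:: (w, w)].
Proof.
elim: w => //= l w IH; rewrite inE negb_or => /andP[l_B /IH ->].
by case: l l_B.
Qed.

Lemma coef_delta_bdeg lam mu nu : coef_delta lam mu nu != 0%N ->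
  bdeg lam = (bdeg mu + bdeg nu)%N.
Proof.
rewrite /coef_delta -lt0n -has_count.
case/hasP => t /delta_word_count_LB t_LB /andP[/eqP <- /eqP <-].
by rewrite !bdeg_nf t_LB count_LB_word_of_mon.
Qed.

Lemma coef_delta_ad i j mu nu :
  coef_delta (mon_ad i j) mu nu = ((mu == mon_ad i j) && (nu == mon_ad i j)) :> nat.
Proof.
have nf_w := nf_word_of_mon (mon_ad i j).
rewrite /coef_delta delta_word_LB_free; last first.
  by apply/count_memPn; rewrite count_LB_word_of_mon.
by rewrite /= nf_w addn0 ![_ == mon_ad _ _]eq_sym.
Qed.

Lemma ex_argmax_in_seq (T : eqType) (P : pred T) (f : T -> nat) (s : seq T) x0 :
  {subset P <= s} -> P x0 -> exists2 x, P x & forall y, P y -> (f y <= f x)%N.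
Proof.
move=> sPs Px0; pose Q n := has (fun y => P y && (f y == n)) s.
have exQ : exists n, Q n.
  by exists (f x0); apply/hasP; exists x0; [apply: sPs | rewrite Px0 /=].
have ubQ n : Q n -> (n <= \max_(y <- s) f y)%N.
  by case/hasP=> y ys /andP[_ /eqP <-]; apply: leq_bigmax_seq.
case: (ex_maxnP exQ ubQ) => n /hasP[x _ /andP[Px /eqP fx]] max_n.
exists x => // y Py; rewrite fx max_n //.
by apply/hasP; exists y; [apply: sPs | rewrite Py /=].
Qed.

Section Comodule.

Variables (k : fieldType) (W : vectType k) (S : seq Mon) (r : Mon -> 'End(W)).
Hypothesis comodW : is_left_comodule S r.

Lemma comodule_coassoc mu nu (w : W) :
  r nu (r mu w) = \sum_(lam <- S) (coef_delta lam mu nu)%:R *: r lam w.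
Proof.
case: comodW => _ _ coassoc _.
by rewrite -comp_lfunE -coassoc sum_lfunE; under eq_bigr do rewrite scale_lfunE.
Qed.

Lemma comodule_counit (w : W) : w = \sum_(lam <- S) (eps_mon lam)%:R *: r lam w.
Proof.
case: comodW => _ _ _ counit.
by rewrite -[LHS]id_lfunE -counit sum_lfunE; under eq_bigr do rewrite scale_lfunE.
Qed.

Lemma comodule_support mu (w : W) : r mu w != 0 -> mu \in S.
Proof.
case: comodW => _ r0 _ _; apply: contraR => /r0 ->.
by rewrite lfunE.
Qed.

Lemma comodule_grouplike_nonzero (v : W) :
  v != 0 -> exists i j, r (mon_ad i j) v != 0.
Proof.
move=> v_nz.
have : has (fun lam => (eps_mon lam != 0%N) && (r lam v != 0)) S.
  apply: contraNT v_nz => /hasPn none; rewrite [v]comodule_counit.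
  rewrite big1_seq // => lam /andP[_ /none]; rewrite negb_and !negbK.
  by case/orP=> /eqP->; rewrite ?scale0r ?scaler0.
case/hasP=> lam _ /andP[]; rewrite eps_monE eqb0 negbK.
by case/bdeg_eq0P=> i [j ->] rv_nz; exists i, j.
Qed.

Lemma exists_b_annihilated (w : W) : w != 0 ->
  exists2 v : W, v != 0 & forall lam, bdeg lam != 0%N -> r lam v = 0.
Proof.
move=> w_nz; have [i [j g_w]] := comodule_grouplike_nonzero w_nz.
have [mu0 mu0_w mu0_max] := ex_argmax_in_seq bdeg (@comodule_support^~ w) g_w.
exists (r mu0 w) => // lam lam_b; rewrite comodule_coassoc big1_seq //.
move=> l _.
have [-> | /coef_delta_bdeg l_deg] := eqVneq (coef_delta l mu0 lam) 0%N.
  by rewrite scale0r.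
suff -> : r l w = 0 by rewrite scaler0.
apply/eqP; apply: contraTT lam_b => /mu0_max.
by rewrite l_deg -[X in (_ <= X)%N]addn0 leq_add2l leqn0 negbK.
Qed.

Lemma semi_invariant_of_b_annihilated i j (v : W) :
  (forall lam, bdeg lam != 0%N -> r lam v = 0) ->
  forall mu, r mu (r (mon_ad i j) v) = if mu == mon_ad i j then r (mon_ad i j) v else 0.
Proof.
move=> v_ann mu; set g := mon_ad i j.
have [g_S | g_notS] := boolP (g \in S); last first.
  have -> : r g v = 0 by apply/eqP; apply: contraR g_notS; apply: comodule_support.
  by rewrite linear0 if_same.
rewrite comodule_coassoc (bigD1_seq g) //=; last by case: comodW.
rewrite coef_delta_ad -/g eqxx /= big1_seq ?addr0.
  by case: eqP; rewrite ?scale1r ?scale0r.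
move=> lam /andP[lam_g _].
have [/bdeg_eq0P[i' [j' lamE]] | /v_ann ->] := boolP (bdeg lam == 0%N); last first.
  by rewrite scaler0.
by rewrite lamE coef_delta_ad -lamE eq_sym (negbTE lam_g) scale0r.
Qed.

End Comodule.

Theorem mainTheorem16 (k : closedFieldType) (W : vectType k)
  (S : seq Mon) (r : Mon -> 'End(W)) :
  (0 < \dim {:W})%N ->
  is_left_comodule S r ->
  exists w : W, w != 0 /\
    exists i j : int, forall mu : Mon, r mu w = if mu == mon_ad i j then w else 0.
Proof.
move=> dimW comodW.
have w_nz : vpick (fullv : {vspace W}) != 0 by rewrite vpick0 -dimv_eq0 -lt0n.
have [v v_nz v_ann] := exists_b_annihilated comodW w_nz.
have [i [j gv_nz]] := comodule_grouplike_nonzero comodW v_nz.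
exists (r (mon_ad i j) v); split=> //; exists i, j.
exact: (semi_invariant_of_b_annihilated comodW i j v_ann).
Qed.
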